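(* Let $\mathcal S\subset\{1,\dots,N\}$, let $\boldsymbol\rho\in\mathbb C^N$ be supported in $\mathcal S$, let $\mathbf d=\mathcal G\boldsymbol\rho$ and $\mathcal Y=\{\vec{\mathbf z}_j:j\in\mathcal S\}$. Let $0<\varepsilon<r<1$ and let $\mathcal S_\varepsilon\subset\mathcal S$ be such that $\mathcal Y\subset\bigcup_{q\in\mathcal S_\varepsilon}\mathcal B_\varepsilon(\vec{\mathbf z}_q)$, and such that the balls $\mathcal B_r(\vec{\mathbf z}_q)$, $q\in\mathcal S_\varepsilon$, are pairwise disjoint (hence so are the balls $\mathcal B_\varepsilon(\vec{\mathbf z}_q)$, $q\in\mathcal S_\varepsilon$). Let $\mathcal Y_\varepsilon=\{\vec{\mathbf z}_j:j\in\mathcal S_\varepsilon\}$ and assume $\mathcal I(\mathcal Y_\varepsilon)<1$. Define the effective source vector $\bar{\boldsymbol\rho}\in\mathbb C^N$ by $$\bar\rho_j=\sum_{q\in\mathcal S:\ \vec{\mathbf z}_q\in\mathcal B_\varepsilon(\vec{\mathbf z}_j)}\rho_q\,\langle\mathbf g_j,\mathbf g_q\rangle\ \ (j\in\mathcal S_\varepsilon),\qquad\bar\rho_j=0\ \ (j\notin\mathcal S_\varepsilon).$$ Let $\boldsymbol\rho_\star$ be a minimizer of $\|\mathbf x\|_1$ over $\mathbf x\in\mathbb C^N$ subject to $\mathcal G\mathbf x=\mathbf d$, and decompose $\boldsymbol\rho_\star=\boldsymbol\rho_\star^{(i)}+\boldsymbol\rho_\star^{(o)}$ with $(\boldsymbol\rho_\star^{(i)})_q=(\boldsymbol\rho_\star)_q$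 if $\vec{\mathbf z}_q\in\bigcup_{j\in\mathcal S_\varepsilon}\mathcal B_r(\vec{\mathbf z}_j)$ and $0$ otherwise. Then $$\|\boldsymbol\rho_\star^{(o)}\|_1\le\frac{2\,\mathcal I(\mathcal Y_\varepsilon)}{r}\|\boldsymbol\rho_\star\|_1+\frac{\|\boldsymbol\rho\|_1-\|\bar{\boldsymbol\rho}\|_1}{r}.$$
   Context: Let $W$ be a set (the imaging region) and $M\ge1$. For each $\vec{\mathbf y}\in W$ let $\mathbf g_{\vec{\mathbf y}}\in\mathbb C^M$ be a vector with $\|\mathbf g_{\vec{\mathbf y}}\|_2=1$. Let $\vec{\mathbf z}_1,\dots,\vec{\mathbf z}_N\in W$ be distinct (grid) points, write $\mathbf g_j=\mathbf g_{\vec{\mathbf z}_j}$, and let $\mathcal G\in\mathbb C^{M\times N}$ be the matrix with columns $\mathbf g_j$. Inner product: $\langle\mathbf u,\mathbf v\rangle=\mathbf u^H\mathbf v=\sum_i\overline{u_i}v_i$. $\|\cdot\|_1$ is the $\ell_1$ norm. Semi-metric: $\mathscr D(\vec{\mathbf y},\vec{\mathbf y}')=1-|\langle\mathbf g_{\vec{\mathbf y}},\mathbf g_{\vec{\mathbf y}'}\rangle|$; ball $\mathcal B_r(\vec{\mathbf y})=\{\vec{\mathbf y}'\in W:\ \mathscr D(\vec{\mathbf y},\vec{\mathbf y}')<r\}$. Interaction coefficient: for a finite set $\mathcal Y\subset W$ and each $q$, let $\mathscr N(\vec{\mathbf z}_q)\in\mathcal Y$ be a point of $\mathcal Y$ minimizing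 $\mathscr D(\vec{\mathbf z}_q,\cdot)$ over $\mathcal Y$; then $\mathcal I(\mathcal Y)=\max_{q=1,\dots,N}\sum_{\vec{\mathbf y}\in\mathcal Y\setminus\{\mathscr N(\vec{\mathbf z}_q)\}}|\langle\mathbf g_{\vec{\mathbf y}},\mathbf g_q\rangle|$. *)

(* Complex numbers are modelled by an arbitrary
   numClosedFieldType C (e.g. algC). *)
From HB Require Import structures.
From mathcomp Require Import all_boot all_order all_algebra.
Set Implicit Arguments. Unset Strict Implicit. Unset Printing Implicit Defensive.
Import Order.TTheory GRing.Theory Num.Theory.
Local Open Scope ring_scope.

Section Defs.
Variable C : numClosedFieldType.

Definition inner (M : nat) (u v : 'I_M -> C) : C := \sum_(i < M) (u i)^* * v i.

Definition sdist (W : Type) (M : nat) (g : W -> 'I_M -> C) (y y' : W) : C :=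
  1 - `|inner (g y) (g y')|.

Definition in_ball (W : Type) (M : nat) (g : W -> 'I_M -> C) (r : C) (y y' : W) : bool :=
  sdist g y y' < r.

Definition l1 (N : nat) (x : 'I_N -> C) : C := \sum_(j < N) `|x j|.

Definition Gmul (W : Type) (M N : nat) (g : W -> 'I_M -> C) (z : 'I_N -> W)
  (x : 'I_N -> C) : 'I_M -> C := fun i => \sum_(j < N) g (z j) i * x j.

Definition nearest_sel (W : Type) (M N : nat) (g : W -> 'I_M -> C) (z : 'I_N -> W)
  (T : {set 'I_N}) (nn : 'I_N -> 'I_N) : Prop :=
  forall q, nn q \in T /\ (forall j, j \in T -> sdist g (z q) (z (nn q)) <= sdist g (z q) (z j)).

Definition interaction (W : Type) (M N : nat) (g : W -> 'I_M -> C) (z : 'I_N -> W)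
  (T : {set 'I_N}) (nn : 'I_N -> 'I_N) : C :=
  \big[Num.max/0]_(q < N) \sum_(j in T | j != nn q) `|inner (g (z j)) (g (z q))|.

End Defs.

From HB Require Import structures.
From mathcomp Require Import all_boot all_order all_algebra.
Import Order.TTheory GRing.Theory Num.Theory.
From mathcomp Require Import ring.
Set Implicit Arguments. Unset Strict Implicit. Unset Printing Implicit Defensive.
Local Open Scope ring_scope.

(* Pair the data with g_j for j in S_eps: since G rho_star = G rho, rhobar_j equals
   sum_q rho_star_q <g_j, g_q> minus the contributions of the sources of rho outside
   B_eps(z_j).  Summing over j, a point q contributes |rho_star_q| sum_j |<g_j, g_q>|
   <= |rho_star_q| (|<g_nn(q), g_q>| + I), and |<g_nn(q), g_q>| <= 1 - r when z_q is
   outside every r-ball; a source q of rho lies in the eps-ball of its nearest point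
   nn(q), so its far contributions sum to at most I |rho_q|.  Hence
   |rhobar|_1 <= (1 + I) |rho_star|_1 - r |rho_star^(o)|_1 + I |rho|_1, and l1-minimality
   |rho_star|_1 <= |rho|_1 together with I < 1 gives the claim. *)

Section InnerProduct.
Variables (C : numClosedFieldType) (M : nat).
Implicit Types u v : 'I_M -> C.

Lemma innerC u v : inner v u = (inner u v)^*.
Proof.
rewrite /inner rmorph_sum; apply: eq_bigr => i _.
by rewrite rmorphM /= conjCK mulrC.
Qed.

Lemma norm_innerC u v : `|inner v u| = `|inner u v|.
Proof. by rewrite innerC norm_conjC. Qed.

Lemma norm_inner_le1 u v : inner u u = 1 -> inner v v = 1 -> `|inner u v| <= 1.
Proof.
move=> Hu Hv; set a := inner u v.
have sq_ge0 : 0 <= \sum_i (v i - a * u i)^* * (v i - a * u i).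
  by apply: sumr_ge0 => i _; rewrite mulrC -normCK exprn_ge0.
have expand : \sum_i (v i - a * u i)^* * (v i - a * u i) =
    inner v v - a * inner v u - a^* * inner u v + a * a^* * inner u u.
  rewrite /inner !mulr_sumr -!sumrB -big_split /=; apply: eq_bigr => i _.
  by rewrite rmorphB rmorphM /=; clearbody a; ring.
rewrite expand Hu Hv innerC -/a (mulrC a^*) -normCK in sq_ge0.
rewrite -(@expr_le1 _ 2) // -subr_ge0.
by move: sq_ge0; clearbody a; congr (0 <= _); ring.
Qed.

End InnerProduct.

Section NonnegBigmax.
Variable C : numClosedFieldType.

Lemma bigmax_ge0 (I : Type) (s : seq I) (F : I -> C) :
  (forall i, 0 <= F i) -> 0 <= \big[Num.max/0]_(i <- s) F i.
Proof.
move=> F0; elim/big_ind: _ => // x y x0 y0.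
by rewrite comparable_le_max ?x0 // real_comparable ?ger0_real.
Qed.

Lemma ler_bigmax (I : eqType) (s : seq I) (F : I -> C) i :
  (forall i, 0 <= F i) -> i \in s -> F i <= \big[Num.max/0]_(j <- s) F j.
Proof.
move=> F0; elim: s => // j s IH; rewrite in_cons big_cons.
rewrite comparable_le_max ?real_comparable ?ger0_real ?bigmax_ge0 //.
by case/orP => [/eqP->|/IH->]; rewrite ?lexx ?orbT.
Qed.

End NonnegBigmax.

Section Imaging.
Variables (C : numClosedFieldType) (W : Type) (M N : nat).
Variables (g : W -> 'I_M -> C) (z : 'I_N -> W).
Lemma sdistC y y' : sdist g y y' = sdist g y' y.
Proof. by rewrite /sdist norm_innerC. Qed.

Lemma inner_Gmul u x :
  inner u (Gmul g z x) = \sum_(q < N) x q * inner u (g (z q)).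
Proof.
rewrite /inner /Gmul; under eq_bigr do rewrite mulr_sumr.
rewrite exchange_big /=; apply: eq_bigr => q _; rewrite mulr_sumr.
by apply: eq_bigr => i _; rewrite mulrA mulrC.
Qed.

Lemma norm_sum_inner_split_le x y (P : pred 'I_N) u : Gmul g z x = Gmul g z y ->
  `|\sum_(q | P q) y q * inner u (g (z q))| <=
    \sum_q `|x q| * `|inner u (g (z q))| +
    \sum_(q | ~~ P q) `|y q| * `|inner u (g (z q))|.
Proof.
move=> Gxy; set F := fun q => y q * inner u (g (z q)).
have -> : \sum_(q | P q) F q = \sum_q F q - \sum_(q | ~~ P q) F q.
  by rewrite [X in X - _](bigID P) /= addrK.
rewrite -inner_Gmul -Gxy inner_Gmul.
apply: le_trans (ler_normB _ _) _; apply: lerD;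
  by apply: le_trans (ler_norm_sum _ _ _) _; apply: ler_sum => q _; rewrite normrM.
Qed.

Lemma norm_inner_outside_ball r y y' : r \is Num.real ->
  ~~ in_ball g r y y' -> `|inner (g y) (g y')| <= 1 - r.
Proof.
rewrite /in_ball /sdist => rR; rewrite -real_leNgt ?rpredB ?real1 ?normr_real //.
by rewrite !lerBrDr addrC.
Qed.

Variables (T : {set 'I_N}) (nn : 'I_N -> 'I_N).
Hypothesis Hnn : nearest_sel g z T nn.
Local Notation ip j q := (inner (g (z j)) (g (z q))).
Local Notation I := (interaction g z T nn).

Lemma sum_norm_inner_le_interaction q : \sum_(j in T | j != nn q) `|ip j q| <= I.
Proof.
apply: (@ler_bigmax C _ (index_enum 'I_N) (fun q => \sum_(j in T | j != nn q) `|ip j q|));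
  rewrite ?mem_index_enum // => i; exact: sumr_ge0.
Qed.

Lemma sum_norm_inner_le q : \sum_(j in T) `|ip j q| <= `|ip (nn q) q| + I.
Proof.
by rewrite (bigD1 (nn q)) ?(Hnn q).1 //= lerD2l sum_norm_inner_le_interaction.
Qed.

(* [z q] lies in the [eps]-ball of its nearest point [nn q], which therefore drops out. *)
Lemma sum_far_norm_inner_le eps q j0 : j0 \in T -> in_ball g eps (z j0) (z q) ->
  \sum_(j in T | ~~ in_ball g eps (z j) (z q)) `|ip j q| <= I.
Proof.
move=> Tj0 near_j0; have [_ nn_min] := Hnn q.
have near_nn : in_ball g eps (z (nn q)) (z q).
  by rewrite /in_ball sdistC (le_lt_trans (nn_min j0 Tj0)) // -sdistC.
apply: le_trans (sum_norm_inner_le_interaction q); rewrite big_mkcondr /=.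
rewrite [leRHS]big_mkcondr /=; apply: ler_sum => j _.
by case: (eqVneq j (nn q)) => [->|_]; rewrite ?near_nn //=; case: ifP.
Qed.

End Imaging.

Section EffectiveSource.
Variables (C : numClosedFieldType) (W : Type) (M N : nat).
Variables (g : W -> 'I_M -> C) (z : 'I_N -> W).
Variables (S T : {set 'I_N}) (rho : 'I_N -> C) (eps r : C).
Local Notation ip j q := (inner (g (z j)) (g (z q))).

Definition effective_source j : C :=
  if j \in T then \sum_(q in S | in_ball g eps (z j) (z q)) rho q * ip j q else 0.

Definition outer_part (x : 'I_N -> C) q : C :=
  if [exists j in T, in_ball g r (z j) (z q)] then 0 else x q.

Hypothesis Hg : forall y, inner (g y) (g y) = 1.
Hypothesis Hrho : forall q, q \notin S -> rho q = 0.
Hypothesis Hcover : forall q, q \in S -> exists2 j, j \in T & in_ball g eps (z j) (z q).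
Hypothesis r_gt0 : 0 < r.
Variable nn : 'I_N -> 'I_N.
Hypothesis Hnn : nearest_sel g z T nn.
Local Notation I := (interaction g z T nn).

Lemma norm_effective_source_le x j : Gmul g z x = Gmul g z rho -> j \in T ->
  `|effective_source j| <= \sum_q `|x q| * `|ip j q| +
    \sum_(q | ~~ in_ball g eps (z j) (z q)) `|rho q| * `|ip j q|.
Proof.
move=> Gx Tj; rewrite /effective_source Tj.
apply: le_trans (norm_sum_inner_split_le _ _ Gx) _; rewrite lerD2l.
rewrite [leLHS]big_mkcond [leRHS]big_mkcond /=; apply: ler_sum => q _.
case: (boolP (q \in S)) => [//|/Hrho->].
by rewrite normr0 !mul0r; case: ifP.
Qed.

Lemma outer_weight_le x q : `|x q| * \sum_(j in T) `|ip j q| <=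
  `|x q| * (1 + I) - r * `|outer_part x q|.
Proof.
apply: le_trans (ler_wpM2l (normr_ge0 _) (sum_norm_inner_le Hnn q)) _.
rewrite /outer_part; case: ifPn => [_|]; last rewrite negb_exists => /forallP far.
  by rewrite normr0 mulr0 subr0 ler_wpM2l // lerD2r norm_inner_le1.
have far_nn : ~~ in_ball g r (z (nn q)) (z q) by have := far (nn q); rewrite (Hnn q).1.
rewrite (mulrC r) -mulrBr ler_wpM2l // addrAC lerD2r.
by rewrite norm_inner_outside_ball ?gtr0_real.
Qed.

Lemma far_weight_le q :
  `|rho q| * \sum_(j in T | ~~ in_ball g eps (z j) (z q)) `|ip j q| <= `|rho q| * I.
Proof.
case: (boolP (q \in S)) => [/Hcover[j0 Tj0 near_j0]|/Hrho->]; last by rewrite normr0 !mul0r.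
by rewrite ler_wpM2l // (sum_far_norm_inner_le Hnn Tj0 near_j0).
Qed.

Lemma l1_effective_source_le x : Gmul g z x = Gmul g z rho ->
  l1 effective_source <= (1 + I) * l1 x - r * l1 (outer_part x) + I * l1 rho.
Proof.
move=> Gx.
have -> : l1 effective_source = \sum_(j in T) `|effective_source j|.
  rewrite /l1 [RHS]big_mkcond; apply: eq_bigr => j _.
  by rewrite /effective_source; case: ifP; rewrite ?normr0.
apply: le_trans (ler_sum _ (fun j Tj => norm_effective_source_le Gx Tj)) _.
rewrite big_split /=; under [X in _ + X]eq_bigr do rewrite big_mkcond /=.
rewrite [X in X + _]exchange_big [X in _ + X]exchange_big /=.
under eq_bigr do rewrite -mulr_sumr.
under [X in _ + X]eq_bigr do rewrite -big_mkcondr -mulr_sumr.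
apply: le_trans (lerD (ler_sum _ (fun q _ => outer_weight_le x q))
                      (ler_sum _ (fun q _ => far_weight_le q))) _.
by rewrite sumrB -!mulr_suml -mulr_sumr /l1 (mulrC _ (1 + I)) (mulrC _ I).
Qed.

End EffectiveSource.

Theorem theorem6 (C : numClosedFieldType) (W : Type) (M N : nat)
  (g : W -> 'I_M -> C) (z : 'I_N -> W)
  (HM : (0 < M)%N)
  (Hg : forall y, inner (g y) (g y) = 1)
  (Hz : injective z)
  (S Seps : {set 'I_N}) (rho : 'I_N -> C)
  (Hrho : forall j, j \notin S -> rho j = 0)
  (eps r : C) (Heps : 0 < eps) (Hepsr : eps < r) (Hr1 : r < 1)
  (HSeps : Seps \subset S)
  (Hcover : forall j, j \in S -> exists2 q, q \in Seps & in_ball g eps (z q) (z j))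
  (Hdisj : forall q1 q2, q1 \in Seps -> q2 \in Seps -> q1 != q2 ->
             forall y : W, ~~ (in_ball g r (z q1) y && in_ball g r (z q2) y))
  (nn : 'I_N -> 'I_N) (Hnn : nearest_sel g z Seps nn)
  (HI : interaction g z Seps nn < 1)
  (rho_star : 'I_N -> C)
  (Hfeas : Gmul g z rho_star = Gmul g z rho)
  (Hmin : forall x : 'I_N -> C, Gmul g z x = Gmul g z rho -> l1 rho_star <= l1 x) :
  let rhobar : 'I_N -> C := fun j =>
    if j \in Seps then
      \sum_(q in S | in_ball g eps (z j) (z q)) rho q * inner (g (z j)) (g (z q))
    else 0 in
  let rho_o : 'I_N -> C := fun q =>
    if [exists j in Seps, in_ball g r (z j) (z q)] then 0 else rho_star q in
  l1 rho_o <= 2 * interaction g z Seps nn / r * l1 rho_star + (l1 rho - l1 rhobar) / r.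
Proof.
rewrite /= -/(effective_source g z S Seps rho eps) -/(outer_part g z Seps r rho_star).
set rhobar := effective_source _ _ _ _ _ _; set rho_o := outer_part _ _ _ _ _.
have r_gt0 : 0 < r := lt_trans Heps Hepsr.
have main := l1_effective_source_le Hg Hrho Hcover r_gt0 Hnn Hfeas.
have optimal : l1 rho_star <= l1 rho := Hmin rho erefl.
set I := interaction g z Seps nn in HI main *.
rewrite mulrAC -mulrDl ler_pdivlMr // mulrC -subr_ge0.
have -> : 2 * I * l1 rho_star + (l1 rho - l1 rhobar) - r * l1 rho_o =
    ((1 + I) * l1 rho_star - r * l1 rho_o + I * l1 rho - l1 rhobar)
    + (1 - I) * (l1 rho - l1 rho_star) by ring.
by rewrite addr_ge0 ?mulr_ge0 // subr_ge0 // ltW.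
Qed.
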